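(* Let $f$ be a complex-valued harmonic function in a bounded open set $R\subset\mathbb{C}$. Suppose that $P=\operatorname{int}(\overline{R})\setminus R$ is empty or consists of finitely many poles of $f$, and suppose that $f$ extends continuously to $\partial R\setminus P$. Then $f(S)\cup f(\partial R\setminus P)$ partitions $\mathbb{C}$ into regions of constant valence: on each connected component of $\mathbb{C}\setminus(f(S)\cup f(\partial R\setminus P))$, the number of distinct $z\in R$ with $f(z)=w$ is constant.
   Context: Writing $f=u+iv$, $J_f=u_xv_y-u_yv_x$ and $S=\{z\in R: J_f(z)=0\}$. A point $\alpha$ is a pole of $f$ if $f$ is harmonic in $\{z:0<|z-\alpha|<r\}$ for some $r>0$ and $\lim_{z\to\alpha}|f(z)|=\infty$. $f(\partial R\setminus P)$ denotes the image under the continuous extension. *)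

From Stdlib Require Import Reals List.
From Coquelicot Require Import Coquelicot.
Open Scope R_scope.

Definition re_part (f : C -> C) (x y : R) : R := fst (f (x, y)).
Definition im_part (f : C -> C) (x y : R) : R := snd (f (x, y)).

Definition dx (g : R -> R -> R) : R -> R -> R :=
  fun x y => Derive (fun t => g t y) x.
Definition dy (g : R -> R -> R) : R -> R -> R :=
  fun x y => Derive (fun t => g x t) y.

Definition C2_at (g : R -> R -> R) (z : C) : Prop :=
  let x := fst z in let y := snd z in
  ex_derive (fun t => g t y) x /\ ex_derive (fun t => g x t) y /\
  ex_derive (fun t => dx g t y) x /\ ex_derive (fun t => dx g x t) y /\
  ex_derive (fun t => dy g t y) x /\ ex_derive (fun t => dy g x t) y /\
  continuous (fun p : C => g (fst p) (snd p)) z /\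
  continuous (fun p : C => dx g (fst p) (snd p)) z /\
  continuous (fun p : C => dy g (fst p) (snd p)) z /\
  continuous (fun p : C => dx (dx g) (fst p) (snd p)) z /\
  continuous (fun p : C => dy (dx g) (fst p) (snd p)) z /\
  continuous (fun p : C => dx (dy g) (fst p) (snd p)) z /\
  continuous (fun p : C => dy (dy g) (fst p) (snd p)) z.

Definition real_harmonic_on (D : C -> Prop) (g : R -> R -> R) : Prop :=
  forall z : C, D z ->
    C2_at g z /\ dx (dx g) (fst z) (snd z) + dy (dy g) (fst z) (snd z) = 0.

Definition harmonic_on (D : C -> Prop) (f : C -> C) : Prop :=
  real_harmonic_on D (re_part f) /\ real_harmonic_on D (im_part f).

Definition jacobian (f : C -> C) (z : C) : R :=
  dx (re_part f) (fst z) (snd z) * dy (im_part f) (fst z) (snd z)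
  - dy (re_part f) (fst z) (snd z) * dx (im_part f) (fst z) (snd z).

Definition critical_set (D : C -> Prop) (f : C -> C) (z : C) : Prop :=
  D z /\ jacobian f z = 0.

Definition bounded_set (D : C -> Prop) : Prop :=
  exists M : R, forall z, D z -> Cmod z <= M.

Definition closure (D : C -> Prop) (z : C) : Prop :=
  forall eps : R, 0 < eps -> exists w, D w /\ Cmod (w - z) < eps.

Definition interior (D : C -> Prop) (z : C) : Prop :=
  exists eps : R, 0 < eps /\ forall w, Cmod (w - z) < eps -> D w.

Definition boundary (D : C -> Prop) (z : C) : Prop :=
  closure D z /\ ~ interior D z.

Definition P_set (D : C -> Prop) (z : C) : Prop :=
  interior (closure D) z /\ ~ D z.

Definition is_pole (f : C -> C) (alpha : C) : Prop :=
  (exists r : R, 0 < r /\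
     harmonic_on (fun z => 0 < Cmod (z - alpha) < r) f) /\
  (forall M : R, exists delta : R, 0 < delta /\
     forall z, 0 < Cmod (z - alpha) < delta -> M < Cmod (f z)).

Definition finite_set (A : C -> Prop) : Prop :=
  exists l : list C, forall z, A z <-> In z l.

Definition image (f : C -> C) (A : C -> Prop) (w : C) : Prop :=
  exists z, A z /\ f z = w.

Definition connected_set (K : C -> Prop) : Prop :=
  forall U V : C -> Prop, open U -> open V ->
    (forall z, K z -> U z \/ V z) ->
    (forall z, K z -> U z -> V z -> False) ->
    (exists z, K z /\ U z) -> (exists z, K z /\ V z) -> False.

Definition same_card (A B : C -> Prop) : Prop :=
  exists g : C -> C,
    (forall z, A z -> B (g z)) /\
    (forall z1 z2, A z1 -> A z2 -> g z1 = g z2 -> z1 = z2) /\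
    (forall w, B w -> exists z, A z /\ g z = w).

From Stdlib Require Import Reals List Lra Lia ClassicalEpsilon Classical.
From Coquelicot Require Import Coquelicot.
Open Scope R_scope.

(* Fix a value w0 outside f(S) and f(dR \ P).  Every point t has a box around it on which
   either f stays away from w0 (inside R and on dR \ P by continuity, near a pole because
   |f| blows up, outside the closure vacuously), or t lies over w0, J_f(t) <> 0, and f is
   injective on the box and covers a disc around w0 (inverse function theorem, proved with
   a contraction).  Since R is bounded, compactness gives these boxes a uniform size, so the
   fibre over w0 is uniformly separated and, for w close to w0, each point over w lies in
   the box of exactly one point over w0.  The valence is therefore locally constant off
   f(S) and f(dR \ P), hence constant on connected sets. *)

Lemma Cmod_le_l1 (z : C) : Cmod z <= Rabs (fst z) + Rabs (snd z).
Proof.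
  destruct z as [x y]; unfold Cmod; simpl.
  pose proof (Rabs_pos x); pose proof (Rabs_pos y).
  rewrite <- (sqrt_Rsqr (Rabs x + Rabs y)) by lra.
  apply sqrt_le_1_alt; unfold Rsqr.
  pose proof (pow2_abs x); pose proof (pow2_abs y); nra.
Qed.

Lemma Rabs_fst_le_Cmod (z : C) : Rabs (fst z) <= Cmod z.
Proof. pose proof (Rmax_Cmod z); pose proof (Rmax_l (Rabs (fst z)) (Rabs (snd z))); lra. Qed.

Lemma Rabs_snd_le_Cmod (z : C) : Rabs (snd z) <= Cmod z.
Proof. pose proof (Rmax_Cmod z); pose proof (Rmax_r (Rabs (fst z)) (Rabs (snd z))); lra. Qed.

Lemma Cmod_sub_diag (z : C) : Cmod (z - z) = 0.
Proof. replace (z - z)%C with (0 : C) by ring; exact Cmod_0. Qed.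

Lemma Cmod_sub_sym (x y : C) : Cmod (x - y) = Cmod (y - x).
Proof. rewrite <- Cmod_opp; f_equal; ring. Qed.

Lemma Cmod_sub_triangle (x y z : C) : Cmod (x - z) <= Cmod (x - y) + Cmod (y - z).
Proof. replace (x - z)%C with ((x - y) + (y - z))%C by ring; apply Cmod_triangle. Qed.

Lemma Cmod_sub_gt0 (x y : C) : x <> y -> 0 < Cmod (x - y).
Proof. intros Hxy; apply Cmod_gt_0; intros E; apply Hxy; rewrite <- (Cplus_0_l y), <- E; ring. Qed.

Definition l1_dist (z z' : C) : R := Rabs (fst z - fst z') + Rabs (snd z - snd z').

Lemma l1_dist_fst (z z' : C) : Rabs (fst z - fst z') <= l1_dist z z'.
Proof. unfold l1_dist; pose proof (Rabs_pos (snd z - snd z')); lra. Qed.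

Lemma l1_dist_snd (z z' : C) : Rabs (snd z - snd z') <= l1_dist z z'.
Proof. unfold l1_dist; pose proof (Rabs_pos (fst z - fst z')); lra. Qed.

Lemma l1_dist_ge0 (z z' : C) : 0 <= l1_dist z z'.
Proof. pose proof (l1_dist_fst z z'); pose proof (Rabs_pos (fst z - fst z')); lra. Qed.

Lemma l1_dist_sym (z z' : C) : l1_dist z z' = l1_dist z' z.
Proof. unfold l1_dist; rewrite (Rabs_minus_sym (fst z)), (Rabs_minus_sym (snd z)); reflexivity. Qed.

Lemma l1_dist_triangle (x y z : C) : l1_dist x z <= l1_dist x y + l1_dist y z.
Proof.
  unfold l1_dist.
  replace (fst x - fst z) with ((fst x - fst y) + (fst y - fst z)) by ring.
  replace (snd x - snd z) with ((snd x - snd y) + (snd y - snd z)) by ring.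
  pose proof (Rabs_triang (fst x - fst y) (fst y - fst z)).
  pose proof (Rabs_triang (snd x - snd y) (snd y - snd z)); lra.
Qed.

Lemma l1_dist_eq0 (z z' : C) : l1_dist z z' = 0 -> z = z'.
Proof.
  intros H; pose proof (Rabs_pos (fst z - fst z')); pose proof (Rabs_pos (snd z - snd z')).
  unfold l1_dist in H.
  assert (E1 : fst z - fst z' = 0) by (apply Rabs_eq_0; lra).
  assert (E2 : snd z - snd z' = 0) by (apply Rabs_eq_0; lra).
  apply injective_projections; lra.
Qed.

Lemma Cmod_sub_le_l1_dist (z z' : C) : Cmod (z - z') <= l1_dist z z'.
Proof. exact (Cmod_le_l1 (z - z')). Qed.

Definition box (z0 : C) (r : R) (z : C) : Prop :=
  Rabs (fst z - fst z0) < r /\ Rabs (snd z - snd z0) < r.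

Lemma box_center (z : C) (r : R) : 0 < r -> box z r z.
Proof. intros Hr; unfold box; rewrite !Rminus_diag, Rabs_R0; split; exact Hr. Qed.

Lemma box_le (z0 : C) (r r' : R) (z : C) : r <= r' -> box z0 r z -> box z0 r' z.
Proof. intros Hr [H1 H2]; split; lra. Qed.

Lemma box_Cmod (z0 : C) (r : R) (z : C) : box z0 r z -> Cmod (z - z0) < 2 * r.
Proof. intros [H1 H2]; pose proof (Cmod_sub_le_l1_dist z z0); unfold l1_dist in *; lra. Qed.

Lemma box_of_l1_dist (z0 : C) (r : R) (z : C) : l1_dist z z0 < r -> box z0 r z.
Proof. intros H; pose proof (l1_dist_fst z z0); pose proof (l1_dist_snd z z0); split; lra. Qed.

Lemma ball_box (z0 : C) (r : R) (z : C) : ball z0 r z <-> box z0 r z.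
Proof. reflexivity. Qed.

Lemma same_card_refl (A : C -> Prop) : same_card A A.
Proof. exists (fun z => z); repeat split; auto; intros w Hw; exists w; auto. Qed.

Lemma same_card_trans (A B E : C -> Prop) : same_card A B -> same_card B E -> same_card A E.
Proof.
  intros [g [gAB [g_inj g_surj]]] [h [hBE [h_inj h_surj]]].
  exists (fun z => h (g z)); repeat split; auto.
  intros w Hw; destruct (h_surj w Hw) as [y [Hy <-]]; destruct (g_surj y Hy) as [z [Hz <-]].
  exists z; auto.
Qed.

Lemma same_card_sym (A B : C -> Prop) : same_card A B -> same_card B A.
Proof.
  intros [g [gAB [g_inj g_surj]]].
  set (ginv := fun w => epsilon (inhabits (0 : C)) (fun z => A z /\ g z = w)).
  assert (Hginv : forall w, B w -> A (ginv w) /\ g (ginv w) = w)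
    by (intros w Hw; exact (epsilon_spec _ _ (g_surj w Hw))).
  exists ginv; repeat split.
  - intros w Hw; apply Hginv, Hw.
  - intros w1 w2 H1 H2 E.
    rewrite <- (proj2 (Hginv w1 H1)), <- (proj2 (Hginv w2 H2)), E; reflexivity.
  - intros z Hz; exists (g z); split; auto.
    destruct (Hginv (g z) (gAB z Hz)) as [HA Hg]; apply g_inj; auto.
Qed.

Lemma open_union_discs (Q : C -> R -> Prop) :
  open (fun w => exists a r, Q a r /\ Cmod (w - a) < r).
Proof.
  intros w [a [r [HQ Hw]]].
  assert (Hd : 0 < (r - Cmod (w - a)) / 2) by lra.
  exists (mkposreal _ Hd); intros y Hy; apply ball_box in Hy; simpl in Hy.
  exists a, r; split; [exact HQ|].
  pose proof (Cmod_sub_triangle y w a); pose proof (box_Cmod _ _ _ Hy); lra.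
Qed.

Lemma same_card_constant_on_connected (F : C -> C -> Prop) (K : C -> Prop) :
  connected_set K ->
  (forall w0, K w0 -> exists r, 0 < r /\
     forall w, Cmod (w - w0) < r -> same_card (F w0) (F w)) ->
  forall w1 w2, K w1 -> K w2 -> same_card (F w1) (F w2).
Proof.
  intros HK Hloc w1 w2 K1 K2.
  apply NNPP; intros Hn.
  set (Q := fun a r => 0 < r /\ forall w, Cmod (w - a) < r -> same_card (F a) (F w)).
  assert (Hcenter : forall a, K a -> exists r, Q a r /\ Cmod (a - a) < r).
  { intros a Ka; destruct (Hloc a Ka) as [r [Hr Ha]]; exists r; rewrite Cmod_sub_diag; split; [split|]; auto. }
  apply (HK (fun w => exists a r, (Q a r /\ same_card (F w1) (F a)) /\ Cmod (w - a) < r)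
            (fun w => exists a r, (Q a r /\ ~ same_card (F w1) (F a)) /\ Cmod (w - a) < r)
            (open_union_discs _) (open_union_discs _)).
  - intros z Kz; destruct (Hcenter z Kz) as [r [HQ Hz]].
    destruct (classic (same_card (F w1) (F z))); [left | right]; exists z, r; auto.
  - intros z _ [a [r [[[_ Ha] Sa] Hz]]] [b [s [[[_ Hb] Sb] Hz']]].
    apply Sb, (same_card_trans _ _ _ Sa), (same_card_trans _ (F z)); auto.
    apply same_card_sym; auto.
  - destruct (Hcenter w1 K1) as [r [HQ Hr]].
    exists w1; split; [exact K1|]; exists w1, r; auto using same_card_refl.
  - destruct (Hcenter w2 K2) as [r [HQ Hr]].
    exists w2; split; [exact K2|]; exists w2, r; auto.
Qed.

Lemma l1_cauchy_converges (u : nat -> C) :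
  (forall eps, 0 < eps -> exists N, forall n m, (N <= n)%nat -> (N <= m)%nat ->
     l1_dist (u m) (u n) < eps) ->
  exists l, forall eps, 0 < eps -> exists N, forall n, (N <= n)%nat -> l1_dist l (u n) < eps.
Proof.
  intros Hu.
  assert (Hcomp : forall pr : C -> R, (forall z z', Rabs (pr z - pr z') <= l1_dist z z') ->
            { l | Un_cv (fun n => pr (u n)) l }).
  { intros pr Hpr; apply Rcomplete.R_complete; intros eps Heps.
    destruct (Hu eps Heps) as [N HN]; exists N; intros n m Hn Hm; unfold Rdist.
    eapply Rle_lt_trans; [apply Hpr | apply HN; lia]. }
  destruct (Hcomp fst l1_dist_fst) as [lx Hlx]; destruct (Hcomp snd l1_dist_snd) as [ly Hly].
  exists (lx, ly); intros eps Heps.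
  destruct (Hlx (eps / 2) ltac:(lra)) as [N1 H1]; destruct (Hly (eps / 2) ltac:(lra)) as [N2 H2].
  exists (N1 + N2)%nat; intros n Hn.
  specialize (H1 n ltac:(lia)); specialize (H2 n ltac:(lia)); unfold Rdist in H1, H2.
  unfold l1_dist; simpl; rewrite Rabs_minus_sym in H1, H2; lra.
Qed.

Lemma half_pow_gt0 (n : nat) : 0 < (/ 2) ^ n.
Proof. apply pow_lt; lra. Qed.

Lemma half_pow_le1 (n : nat) : (/ 2) ^ n <= 1.
Proof. induction n; simpl; [lra | pose proof (half_pow_gt0 n); lra]. Qed.

Lemma half_pow_vanishes (c eps : R) : 0 <= c -> 0 < eps ->
  exists N, forall n, (N <= n)%nat -> c * (/ 2) ^ n < eps.
Proof.
  intros Hc Heps.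
  destruct (pow_lt_1_zero (/ 2) ltac:(rewrite Rabs_pos_eq; lra) (eps / (c + 1)))
    as [N HN]; [apply Rdiv_lt_0_compat; lra|].
  exists N; intros n Hn; specialize (HN n Hn).
  rewrite Rabs_pos_eq in HN by (apply Rlt_le, half_pow_gt0).
  apply Rmult_lt_compat_l with (r := c + 1) in HN; [|lra].
  replace ((c + 1) * (eps / (c + 1))) with eps in HN by (field; lra).
  pose proof (half_pow_gt0 n); nra.
Qed.

Section Contraction.
Variables (T : C -> C) (z0 : C) (rho : R).
Hypothesis T_contracts : forall z1 z2, box z0 rho z1 -> box z0 rho z2 ->
  l1_dist (T z2) (T z1) <= l1_dist z2 z1 / 2.
Hypothesis T_moves_z0_little : 2 * l1_dist (T z0) z0 < rho.

Let s0 := l1_dist (T z0) z0.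
Let orbit (n : nat) : C := Nat.iter n T z0.

Lemma orbit_box_of_bound (z : C) (q : R) :
  0 <= q <= 1 -> l1_dist z z0 <= 2 * s0 * (1 - q) -> box z0 rho z.
Proof.
  intros Hq Hz; apply box_of_l1_dist.
  pose proof (l1_dist_ge0 (T z0) z0); unfold s0 in *; nra.
Qed.

Lemma orbit_bounds (n : nat) :
  l1_dist (orbit (S n)) (orbit n) <= s0 * (/ 2) ^ n /\
  l1_dist (orbit n) z0 <= 2 * s0 * (1 - (/ 2) ^ n).
Proof.
  induction n as [|n [IHstep IHdist]].
  - unfold l1_dist at 2; simpl; rewrite !Rminus_diag, Rabs_R0; unfold s0; lra.
  - pose proof (half_pow_gt0 n); pose proof (half_pow_le1 n).
    assert (Hdist : l1_dist (orbit (S n)) z0 <= 2 * s0 * (1 - (/ 2) ^ S n)).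
    { pose proof (l1_dist_triangle (orbit (S n)) (orbit n) z0); simpl pow; lra. }
    split; [|exact Hdist].
    pose proof (half_pow_gt0 (S n)); pose proof (half_pow_le1 (S n)).
    eapply Rle_trans; [apply (T_contracts (orbit n) (orbit (S n)))|].
    + apply (orbit_box_of_bound _ ((/ 2) ^ n)); [lra | exact IHdist].
    + apply (orbit_box_of_bound _ ((/ 2) ^ S n)); [lra | exact Hdist].
    + simpl pow; lra.
Qed.

Lemma orbit_in_box (n : nat) : box z0 rho (orbit n).
Proof.
  pose proof (half_pow_gt0 n); pose proof (half_pow_le1 n).
  apply (orbit_box_of_bound _ ((/ 2) ^ n)); [lra | apply orbit_bounds].
Qed.

Lemma orbit_cauchy (n k : nat) : l1_dist (orbit (n + k)) (orbit n) <= 2 * s0 * (/ 2) ^ n.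
Proof.
  pose proof (l1_dist_ge0 (T z0) z0); fold s0 in H.
  assert (Hk : l1_dist (orbit (n + k)) (orbit n) <= 2 * s0 * (/ 2) ^ n * (1 - (/ 2) ^ k)).
  { induction k as [|k IH].
    - rewrite Nat.add_0_r; unfold l1_dist; rewrite !Rminus_diag, Rabs_R0; simpl; lra.
    - replace (n + S k)%nat with (S (n + k)) by lia.
      pose proof (l1_dist_triangle (orbit (S (n + k))) (orbit (n + k)) (orbit n)).
      destruct (orbit_bounds (n + k)) as [Hstep _]; rewrite pow_add in Hstep; simpl pow.
      pose proof (half_pow_gt0 n); pose proof (half_pow_gt0 k); nra. }
  assert (0 <= 2 * s0 * (/ 2) ^ n) by (pose proof (half_pow_gt0 n); nra).
  pose proof (half_pow_gt0 k); nra.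
Qed.

Lemma contraction_fixed_point :
  exists z, l1_dist z z0 <= 2 * l1_dist (T z0) z0 /\ T z = z.
Proof.
  pose proof (l1_dist_ge0 (T z0) z0); fold s0 in H |- *.
  destruct (l1_cauchy_converges orbit) as [l Hl].
  { intros eps Heps; destruct (half_pow_vanishes (2 * s0) eps ltac:(lra) Heps) as [N HN].
    exists N; intros n m Hn Hm.
    destruct (Nat.le_ge_cases n m) as [Hnm | Hmn].
    - replace m with (n + (m - n))%nat by lia.
      eapply Rle_lt_trans; [apply orbit_cauchy | apply HN; lia].
    - rewrite l1_dist_sym; replace n with (m + (n - m))%nat by lia.
      eapply Rle_lt_trans; [apply orbit_cauchy | apply HN; lia]. }
  assert (Hl_dist : l1_dist l z0 <= 2 * s0).
  { apply Rle_plus_epsilon; intros eps Heps; destruct (Hl eps Heps) as [N HN].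
    pose proof (HN N (le_n N)); pose proof (l1_dist_triangle l (orbit N) z0).
    destruct (orbit_bounds N) as [_ HN0]; pose proof (half_pow_gt0 N); nra. }
  exists l; split; [exact Hl_dist|].
  apply l1_dist_eq0, Rle_antisym; [|apply l1_dist_ge0].
  apply Rle_plus_epsilon; intros eps Heps; destruct (Hl (eps / 2) ltac:(lra)) as [N HN].
  pose proof (HN N (le_n N)); pose proof (HN (S N) (Nat.le_succ_diag_r N)).
  pose proof (l1_dist_triangle (T l) (orbit (S N)) l).
  assert (Hcontr : l1_dist (T l) (T (orbit N)) <= l1_dist l (orbit N) / 2).
  { apply T_contracts; [apply orbit_in_box | apply box_of_l1_dist; unfold s0 in *; lra]. }
  rewrite (l1_dist_sym (orbit (S N))) in *; simpl in *; lra.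
Qed.

End Contraction.

Lemma continuous_box (F : C -> R) (z0 : C) (eps : R) : continuous F z0 -> 0 < eps ->
  exists r, 0 < r /\ forall z, box z0 r z -> Rabs (F z - F z0) < eps.
Proof.
  intros HF Heps; destruct (proj1 (filterlim_locally F (F z0)) HF (mkposreal _ Heps)) as [r Hr].
  exists r; split; [apply cond_pos | intros z Hz; apply (Hr z), ball_box, Hz].
Qed.

Lemma open_box (D : C -> Prop) (z0 : C) : open D -> D z0 ->
  exists r, 0 < r /\ forall z, box z0 r z -> D z.
Proof.
  intros HD Hz0; destruct (HD z0 Hz0) as [r Hr].
  exists r; split; [apply cond_pos | intros z Hz; apply Hr, ball_box, Hz].
Qed.

Lemma Rabs_sub_lt_between (a b t x0 r : R) : Rabs (a - x0) < r -> Rabs (b - x0) < r ->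
  Rmin a b <= t <= Rmax a b -> Rabs (t - x0) < r.
Proof.
  intros Ha Hb Ht; apply Rabs_lt_between' in Ha, Hb; apply Rabs_lt_between'.
  unfold Rmin, Rmax in Ht; destruct (Rle_dec a b); lra.
Qed.

Lemma MVT_ex_derive (h : R -> R) (a b : R) :
  (forall t, Rmin a b <= t <= Rmax a b -> ex_derive h t) ->
  exists c, Rmin a b <= c <= Rmax a b /\ h b - h a = Derive h c * (b - a).
Proof.
  intros Hh; apply (MVT_gen h a b (Derive h)).
  - intros t Ht; apply Derive_correct, Hh; lra.
  - intros t Ht; apply continuity_pt_filterlim.
    exact (@ex_derive_continuous R_AbsRing R_NormedModule h t (Hh t Ht)).
Qed.

(* Mean value theorem along the two sides of the rectangle with corners z1 and z2. *)
Lemma linear_approx_on_box (g : R -> R -> R) (z0 : C) (r eps : R) :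
  (forall z, box z0 r z ->
     ex_derive (fun t => g t (snd z)) (fst z) /\ ex_derive (fun t => g (fst z) t) (snd z)) ->
  (forall z, box z0 r z ->
     Rabs (dx g (fst z) (snd z) - dx g (fst z0) (snd z0)) < eps /\
     Rabs (dy g (fst z) (snd z) - dy g (fst z0) (snd z0)) < eps) ->
  forall z1 z2, box z0 r z1 -> box z0 r z2 ->
    Rabs (g (fst z2) (snd z2) - g (fst z1) (snd z1)
          - (dx g (fst z0) (snd z0) * (fst z2 - fst z1) + dy g (fst z0) (snd z0) * (snd z2 - snd z1)))
    <= eps * l1_dist z2 z1.
Proof.
  intros Hder Hclose [x1 y1] [x2 y2] [Hx1 Hy1] [Hx2 Hy2]; simpl in *.
  destruct (MVT_ex_derive (fun t => g t y2) x1 x2) as [xi [Hxi Exi]].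
  { intros t Ht; apply (Hder (t, y2)); split; simpl; [|lra].
    apply (Rabs_sub_lt_between x1 x2); auto. }
  destruct (MVT_ex_derive (fun t => g x1 t) y1 y2) as [eta [Heta Eeta]].
  { intros t Ht; apply (Hder (x1, t)); split; simpl; [lra|].
    apply (Rabs_sub_lt_between y1 y2); auto. }
  assert (Bxi : box z0 r (xi, y2))
    by (split; simpl; [apply (Rabs_sub_lt_between x1 x2) | ]; auto).
  assert (Beta : box z0 r (x1, eta))
    by (split; simpl; [ | apply (Rabs_sub_lt_between y1 y2)]; auto).
  destruct (Hclose _ Bxi) as [Cxi _]; destruct (Hclose _ Beta) as [_ Ceta]; simpl in Cxi, Ceta.
  replace (g x2 y2 - g x1 y1 - _)
    with ((dx g xi y2 - dx g (fst z0) (snd z0)) * (x2 - x1)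
          + (dy g x1 eta - dy g (fst z0) (snd z0)) * (y2 - y1)) by (unfold dx, dy; lra).
  unfold l1_dist; simpl.
  eapply Rle_trans; [apply Rabs_triang|]; rewrite !Rabs_mult.
  pose proof (Rabs_pos (x2 - x1)); pose proof (Rabs_pos (y2 - y1)); nra.
Qed.

Lemma real_harmonic_linear_approx (D : C -> Prop) (g : R -> R -> R) (z0 : C) (eps : R) :
  open D -> real_harmonic_on D g -> D z0 -> 0 < eps ->
  exists r, 0 < r /\ (forall z, box z0 r z -> D z) /\
   forall z1 z2, box z0 r z1 -> box z0 r z2 ->
    Rabs (g (fst z2) (snd z2) - g (fst z1) (snd z1)
          - (dx g (fst z0) (snd z0) * (fst z2 - fst z1) + dy g (fst z0) (snd z0) * (snd z2 - snd z1)))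
    <= eps * l1_dist z2 z1.
Proof.
  intros HD Hg Hz0 Heps.
  destruct (open_box D z0 HD Hz0) as [r0 [Hr0 HD0]].
  destruct (Hg z0 Hz0) as [[_ [_ [_ [_ [_ [_ [_ [Cx [Cy _]]]]]]]]] _].
  destruct (continuous_box _ _ eps Cx Heps) as [r1 [Hr1 H1]].
  destruct (continuous_box _ _ eps Cy Heps) as [r2 [Hr2 H2]].
  set (r := Rmin r0 (Rmin r1 r2)).
  assert (Hr : 0 < r) by (apply Rmin_pos; [|apply Rmin_pos]; auto).
  assert (Hle0 : r <= r0) by apply Rmin_l.
  assert (Hle1 : r <= r1) by (eapply Rle_trans; [apply Rmin_r | apply Rmin_l]).
  assert (Hle2 : r <= r2) by (eapply Rle_trans; [apply Rmin_r | apply Rmin_r]).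
  exists r; split; [exact Hr|]; split; [intros z Hz; apply HD0, (box_le _ r); auto|].
  apply linear_approx_on_box.
  - intros z Hz; destruct (Hg z (HD0 z (box_le _ _ _ _ Hle0 Hz))) as [[Ex [Ey _]] _].
    destruct z; split; assumption.
  - intros z Hz; split; [apply (H1 z) | apply (H2 z)]; eapply box_le; eauto.
Qed.

Section NearLinear.
Variables (F : C -> C) (z0 : C) (rho a b c e eps : R).
Let J := a * e - b * c.
Hypothesis det_neq0 : J <> 0.
Hypothesis eps_small : (Rabs a + Rabs b + Rabs c + Rabs e) * (2 * eps) <= Rabs J / 2.
Hypothesis F_near_linear : forall z1 z2, box z0 rho z1 -> box z0 rho z2 ->
  Rabs (fst (F z2) - fst (F z1) - (a * (fst z2 - fst z1) + b * (snd z2 - snd z1)))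
    <= eps * l1_dist z2 z1 /\
  Rabs (snd (F z2) - snd (F z1) - (c * (fst z2 - fst z1) + e * (snd z2 - snd z1)))
    <= eps * l1_dist z2 z1.

Lemma inverse_l1_bound (p q d : R) : 0 <= d -> Rabs p + Rabs q <= 2 * eps * d ->
  Rabs ((e * p - b * q) / J) + Rabs ((- c * p + a * q) / J) <= d / 2.
Proof.
  intros Hd Hpq.
  assert (HJ : 0 < Rabs J) by (apply Rabs_pos_lt; exact det_neq0).
  assert (X1 : Rabs (e * p - b * q) <= Rabs e * Rabs p + Rabs b * Rabs q).
  { unfold Rminus; eapply Rle_trans; [apply Rabs_triang|]; rewrite Rabs_Ropp, !Rabs_mult; lra. }
  assert (X2 : Rabs (- c * p + a * q) <= Rabs c * Rabs p + Rabs a * Rabs q).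
  { eapply Rle_trans; [apply Rabs_triang|]; rewrite !Rabs_mult, Rabs_Ropp; lra. }
  pose proof (Rabs_pos a); pose proof (Rabs_pos b); pose proof (Rabs_pos c);
  pose proof (Rabs_pos e); pose proof (Rabs_pos p); pose proof (Rabs_pos q).
  set (al := Rabs a + Rabs b + Rabs c + Rabs e) in eps_small.
  assert (Hsum : Rabs (e * p - b * q) + Rabs (- c * p + a * q) <= Rabs J / 2 * d).
  { assert (Hal : al * (Rabs p + Rabs q) <= al * (2 * eps * d))
      by (apply Rmult_le_compat_l; [unfold al; lra | exact Hpq]).
    assert (al * (2 * eps) * d <= Rabs J / 2 * d) by (apply Rmult_le_compat_r; auto).
    assert (Rabs e * Rabs p + Rabs b * Rabs q + (Rabs c * Rabs p + Rabs a * Rabs q)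
            <= al * (Rabs p + Rabs q)) by (unfold al; nra).
    lra. }
  unfold Rdiv; rewrite !Rabs_mult, Rabs_inv, <- Rmult_plus_distr_r.
  replace (d * / 2) with (Rabs J / 2 * d * / Rabs J) by (field; lra).
  apply Rmult_le_compat_r; [left; apply Rinv_0_lt_compat|]; lra.
Qed.

Lemma inverse_linear_left (h1 h2 : R) :
  (e * (a * h1 + b * h2) - b * (c * h1 + e * h2)) / J = h1 /\
  (- c * (a * h1 + b * h2) + a * (c * h1 + e * h2)) / J = h2.
Proof. split; unfold J; field; exact det_neq0. Qed.

Lemma inverse_linear_right (p q : R) :
  a * ((e * p - b * q) / J) + b * ((- c * p + a * q) / J) = p /\
  c * ((e * p - b * q) / J) + e * ((- c * p + a * q) / J) = q.
Proof. split; unfold J; field; exact det_neq0. Qed.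

Lemma near_linear_injective (z1 z2 : C) :
  box z0 rho z1 -> box z0 rho z2 -> F z1 = F z2 -> z1 = z2.
Proof.
  intros B1 B2 Ef; destruct (F_near_linear z1 z2 B1 B2) as [E1 E2]; rewrite Ef in E1, E2.
  set (h1 := fst z2 - fst z1) in *; set (h2 := snd z2 - snd z1) in *.
  rewrite Rminus_diag, Rminus_0_l, Rabs_Ropp in E1, E2.
  pose proof (l1_dist_ge0 z2 z1) as Hd.
  destruct (inverse_linear_left h1 h2) as [L1 L2].
  pose proof (inverse_l1_bound (a * h1 + b * h2) (c * h1 + e * h2) (l1_dist z2 z1) Hd
                ltac:(lra)) as Hbound.
  rewrite L1, L2 in Hbound.
  assert (l1_dist z2 z1 = Rabs h1 + Rabs h2) by reflexivity.
  symmetry; apply l1_dist_eq0; lra.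
Qed.

Lemma near_linear_surjective (sg : R) (w : C) :
  0 < sg <= rho -> Cmod (w - F z0) < eps * sg -> exists z, box z0 sg z /\ F z = w.
Proof.
  intros Hsg Hw.
  set (P := fun z => fst (F z) - fst w); set (Q := fun z => snd (F z) - snd w).
  (* Newton-type map [T z = z - L^-1 (F z - w)], with [L] the matrix [[a, b], [c, e]]:
     it contracts, and its fixed point solves [F z = w]. *)
  set (T := fun z : C => (fst z - (e * P z - b * Q z) / J, snd z - (- c * P z + a * Q z) / J) : C).
  assert (Heps : 0 < eps) by (pose proof (Cmod_ge_0 (w - F z0)); nra).
  assert (T_contracts : forall z1 z2, box z0 sg z1 -> box z0 sg z2 ->
            l1_dist (T z2) (T z1) <= l1_dist z2 z1 / 2).
  { intros z1 z2 B1 B2.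
    destruct (F_near_linear z1 z2 (box_le _ _ _ _ (proj2 Hsg) B1) (box_le _ _ _ _ (proj2 Hsg) B2))
      as [E1 E2].
    set (X1 := fst (F z2) - fst (F z1) - _) in E1; set (X2 := snd (F z2) - snd (F z1) - _) in E2.
    replace (l1_dist (T z2) (T z1))
      with (Rabs ((e * X1 - b * X2) / J) + Rabs ((- c * X1 + a * X2) / J)).
    - apply inverse_l1_bound; [apply l1_dist_ge0 | lra].
    - unfold l1_dist, T, P, Q, X1, X2; simpl; rewrite <- (Rabs_Ropp ((e * _ - _) / J)),
        <- (Rabs_Ropp ((- c * _ + _) / J)); do 2 f_equal; unfold J; field; exact det_neq0. }
  assert (T_moves_z0_little : 2 * l1_dist (T z0) z0 < sg).
  { assert (HP : Rabs (P z0) <= Cmod (w - F z0))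
      by (unfold P; rewrite Rabs_minus_sym; apply (Rabs_fst_le_Cmod (w - F z0))).
    assert (HQ : Rabs (Q z0) <= Cmod (w - F z0))
      by (unfold Q; rewrite Rabs_minus_sym; apply (Rabs_snd_le_Cmod (w - F z0))).
    pose proof (Cmod_ge_0 (w - F z0)).
    pose proof (inverse_l1_bound (P z0) (Q z0) (Cmod (w - F z0) / eps)
                  ltac:(apply Rdiv_le_0_compat; lra)) as Hbound.
    replace (l1_dist (T z0) z0)
      with (Rabs ((e * P z0 - b * Q z0) / J) + Rabs ((- c * P z0 + a * Q z0) / J)).
    - assert (Cmod (w - F z0) / eps < sg) by (apply Rlt_div_l; lra).
      enough (Rabs (P z0) + Rabs (Q z0) <= 2 * eps * (Cmod (w - F z0) / eps)) by lra.
      replace (2 * eps * (Cmod (w - F z0) / eps)) with (2 * Cmod (w - F z0)) by (field; lra); lra.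
    - unfold l1_dist, T; simpl; rewrite <- !(Rabs_Ropp (_ / J)); do 2 f_equal; ring. }
  destruct (contraction_fixed_point T z0 sg T_contracts T_moves_z0_little) as [z [Hz Tz]].
  exists z; split; [apply box_of_l1_dist; lra|].
  assert (Z1 : (e * P z - b * Q z) / J = 0) by (apply (f_equal fst) in Tz; simpl in Tz; lra).
  assert (Z2 : (- c * P z + a * Q z) / J = 0) by (apply (f_equal snd) in Tz; simpl in Tz; lra).
  destruct (inverse_linear_right (P z) (Q z)) as [R1 R2]; rewrite Z1, Z2 in R1, R2.
  unfold P, Q in R1, R2; apply injective_projections; lra.
Qed.

End NearLinear.

Lemma re_part_eq (f : C -> C) (z : C) : re_part f (fst z) (snd z) = fst (f z).
Proof. destruct z; reflexivity. Qed.

Lemma im_part_eq (f : C -> C) (z : C) : im_part f (fst z) (snd z) = snd (f z).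
Proof. destruct z; reflexivity. Qed.

Lemma Rabs_coeffs_gt0 (a b c e : R) :
  a * e - b * c <> 0 -> 0 < Rabs a + Rabs b + Rabs c + Rabs e.
Proof.
  intros HJ; pose proof (Rabs_pos a); pose proof (Rabs_pos b);
    pose proof (Rabs_pos c); pose proof (Rabs_pos e).
  destruct (Req_dec a 0) as [Ha | Ha]; [destruct (Req_dec b 0) as [Hb | Hb]|].
  - exfalso; apply HJ; rewrite Ha, Hb; ring.
  - pose proof (Rabs_pos_lt _ Hb); lra.
  - pose proof (Rabs_pos_lt _ Ha); lra.
Qed.

Lemma harmonic_local_inverse (D : C -> Prop) (f : C -> C) (z0 : C) :
  open D -> harmonic_on D f -> D z0 -> jacobian f z0 <> 0 ->
  exists rho c, 0 < rho /\ 0 < c /\ (forall z, box z0 rho z -> D z) /\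
   (forall z1 z2, box z0 rho z1 -> box z0 rho z2 -> f z1 = f z2 -> z1 = z2) /\
   (forall sg w, 0 < sg <= rho -> Cmod (w - f z0) < c * sg ->
      exists z, box z0 sg z /\ f z = w).
Proof.
  intros HD [Hu Hv] Hz0 HJ.
  set (a := dx (re_part f) (fst z0) (snd z0)) in *.
  set (b := dy (re_part f) (fst z0) (snd z0)) in *.
  set (c := dx (im_part f) (fst z0) (snd z0)) in *.
  set (e := dy (im_part f) (fst z0) (snd z0)) in *.
  change (a * e - b * c <> 0) in HJ.
  set (al := Rabs a + Rabs b + Rabs c + Rabs e).
  assert (HaJ : 0 < Rabs (a * e - b * c)) by (apply Rabs_pos_lt; exact HJ).
  assert (Hal : 0 < al) by exact (Rabs_coeffs_gt0 a b c e HJ).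
  set (eps := Rabs (a * e - b * c) / (4 * al)).
  assert (Heps : 0 < eps) by (apply Rdiv_lt_0_compat; lra).
  assert (eps_small : al * (2 * eps) <= Rabs (a * e - b * c) / 2)
    by (unfold eps; right; field; lra).
  destruct (real_harmonic_linear_approx D _ z0 eps HD Hu Hz0 Heps) as [r1 [Hr1 [HD1 Hlin1]]].
  destruct (real_harmonic_linear_approx D _ z0 eps HD Hv Hz0 Heps) as [r2 [Hr2 [HD2 Hlin2]]].
  set (rho := Rmin r1 r2).
  assert (Hrho : 0 < rho) by (apply Rmin_pos; auto).
  assert (f_near_linear : forall z1 z2, box z0 rho z1 -> box z0 rho z2 ->
    Rabs (fst (f z2) - fst (f z1) - (a * (fst z2 - fst z1) + b * (snd z2 - snd z1)))
      <= eps * l1_dist z2 z1 /\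
    Rabs (snd (f z2) - snd (f z1) - (c * (fst z2 - fst z1) + e * (snd z2 - snd z1)))
      <= eps * l1_dist z2 z1).
  { intros z1 z2 B1 B2; rewrite <- !re_part_eq, <- !im_part_eq; split.
    - apply Hlin1; eapply box_le; eauto; apply Rmin_l.
    - apply Hlin2; eapply box_le; eauto; apply Rmin_r. }
  exists rho, eps; split; [exact Hrho|]; split; [exact Heps|]; split; [|split].
  - intros z Hz; apply HD1, (box_le _ rho); [apply Rmin_l | exact Hz].
  - exact (near_linear_injective f z0 rho a b c e eps HJ eps_small f_near_linear).
  - exact (near_linear_surjective f z0 rho a b c e eps HJ eps_small f_near_linear).
Qed.

Lemma box_sym (z0 z : C) (r : R) : box z0 r z -> box z r z0.
Proof. intros [H1 H2]; split; rewrite Rabs_minus_sym; assumption. Qed.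

Lemma box_triangle (z0 z y : C) (r s : R) : box z0 r z -> box z s y -> box z0 (r + s) y.
Proof.
  intros [H1 H2] [H3 H4]; split.
  - replace (fst y - fst z0) with ((fst y - fst z) + (fst z - fst z0)) by ring.
    eapply Rle_lt_trans; [apply Rabs_triang | lra].
  - replace (snd y - snd z0) with ((snd y - snd z) + (snd z - snd z0)) by ring.
    eapply Rle_lt_trans; [apply Rabs_triang | lra].
Qed.

Lemma bounded_box_cover (D : C -> Prop) (delta : C -> R) :
  bounded_set D -> (forall t, 0 < delta t) ->
  exists d, 0 < d /\ forall z, D z -> exists t, box t (delta t) z /\ d <= delta t.
Proof.
  intros [M HM] Hdelta.
  destruct (compactness_value_2d (- M) M (- M) M (fun u v => mkposreal _ (Hdelta (u, v))))
    as [d Hd].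
  exists d; split; [apply cond_pos|]; intros z Hz.
  pose proof (Rabs_fst_le_Cmod z); pose proof (Rabs_snd_le_Cmod z); pose proof (HM z Hz).
  assert (Hx : - M <= fst z <= M) by (apply Rabs_le_between; lra).
  assert (Hy : - M <= snd z <= M) by (apply Rabs_le_between; lra).
  apply NNPP; intros Hn; apply (Hd (fst z) (snd z) Hx Hy).
  intros [u [v [_ [_ [Hu [Hv Hle]]]]]]; apply Hn.
  exists (u, v); split; [split|]; assumption.
Qed.

Lemma harmonic_continuous_box (D : C -> Prop) (f : C -> C) (t : C) (eps : R) :
  harmonic_on D f -> D t -> 0 < eps ->
  exists rho, 0 < rho /\ forall z, box t rho z -> Cmod (f z - f t) < eps.
Proof.
  intros [Hu Hv] Ht Heps.
  destruct (Hu t Ht) as [[_ [_ [_ [_ [_ [_ [Cu _]]]]]]] _].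
  destruct (Hv t Ht) as [[_ [_ [_ [_ [_ [_ [Cv _]]]]]]] _].
  destruct (continuous_box _ _ (eps / 2) Cu ltac:(lra)) as [r1 [Hr1 H1]].
  destruct (continuous_box _ _ (eps / 2) Cv ltac:(lra)) as [r2 [Hr2 H2]].
  exists (Rmin r1 r2); split; [apply Rmin_pos; auto|]; intros z Hz.
  specialize (H1 z (box_le _ _ _ _ (Rmin_l _ _) Hz)); specialize (H2 z (box_le _ _ _ _ (Rmin_r _ _) Hz)).
  rewrite !re_part_eq in H1; rewrite !im_part_eq in H2.
  pose proof (Cmod_sub_le_l1_dist (f z) (f t)); unfold l1_dist in *; lra.
Qed.

Definition fibre (D : C -> Prop) (f : C -> C) (w z : C) : Prop := D z /\ f z = w.

Section LocalValence.
Variables (D : C -> Prop) (f : C -> C).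
Hypotheses (D_open : open D) (D_bounded : bounded_set D) (f_harmonic : harmonic_on D f)
  (P_poles : forall alpha, P_set D alpha -> is_pole f alpha)
  (f_continuous_on_boundary : forall z, boundary D z -> ~ P_set D z ->
     forall eps : R, 0 < eps -> exists delta : R, 0 < delta /\
       forall w, closure D w -> ~ P_set D w -> Cmod (w - z) < delta ->
         Cmod (f w - f z) < eps).

Definition adapted_radius (w0 t : C) (r : R) : Prop :=
  0 < r /\
  (~ fibre D f w0 t -> forall z, D z -> box t r z -> r <= Cmod (f z - w0)) /\
  (fibre D f w0 t ->
     (forall z, box t r z -> D z) /\
     (forall z1 z2, box t r z1 -> box t r z2 -> f z1 = f z2 -> z1 = z2) /\
     (forall sg w, 0 < sg <= r -> Cmod (w - w0) < r * sg -> exists z, box t sg z /\ f z = w)).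

Lemma adapted_radius_off_fibre (w0 t : C) (r : R) : ~ fibre D f w0 t -> 0 < r ->
  (forall z, D z -> box t r z -> r <= Cmod (f z - w0)) -> adapted_radius w0 t r.
Proof. intros Ht Hr Hfar; split; [exact Hr | split; [intros _; exact Hfar | contradiction]]. Qed.

Lemma adapted_radius_near_value (w0 t : C) (rho : R) : ~ fibre D f w0 t -> f t <> w0 -> 0 < rho ->
  (forall z, D z -> box t rho z -> Cmod (f z - f t) < Cmod (f t - w0) / 2) ->
  exists r, adapted_radius w0 t r.
Proof.
  intros Ht Hft Hrho Hclose; pose proof (Cmod_sub_gt0 _ _ Hft).
  exists (Rmin rho (Cmod (f t - w0) / 2)).
  apply adapted_radius_off_fibre; [exact Ht | apply Rmin_pos; lra|]; intros z Hz Hbox.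
  specialize (Hclose z Hz (box_le _ _ _ _ (Rmin_l _ _) Hbox)); rewrite Cmod_sub_sym in Hclose.
  pose proof (Cmod_sub_triangle (f t) (f z) w0); pose proof (Rmin_r rho (Cmod (f t - w0) / 2)); lra.
Qed.

Lemma adapted_radius_regular (w0 t : C) : fibre D f w0 t -> jacobian f t <> 0 ->
  exists r, adapted_radius w0 t r.
Proof.
  intros [Ht <-] HJ.
  destruct (harmonic_local_inverse D f t D_open f_harmonic Ht HJ)
    as [rho [c [Hrho [Hc [Hbox [Hinj Hsurj]]]]]].
  pose proof (Rmin_l rho c); pose proof (Rmin_r rho c).
  exists (Rmin rho c); split; [apply Rmin_pos; auto|]; split.
  - intros Hn; exfalso; apply Hn; split; auto.
  - intros _; split; [|split].
    + intros z Hz; apply Hbox; eapply box_le; eauto.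
    + intros z1 z2 B1 B2; apply Hinj; eapply box_le; eauto.
    + intros sg w Hsg Hw; apply Hsurj; [lra|].
      eapply Rlt_le_trans; [exact Hw | apply Rmult_le_compat_r; lra].
Qed.

Lemma adapted_radius_pole (w0 t : C) : P_set D t -> exists r, adapted_radius w0 t r.
Proof.
  intros Pt; destruct (P_poles t Pt) as [_ Hinf].
  destruct (Hinf (Cmod w0 + 1)) as [d1 [Hd1 Hbig]].
  exists (Rmin (d1 / 4) 1); pose proof (Rmin_l (d1 / 4) 1); pose proof (Rmin_r (d1 / 4) 1).
  apply adapted_radius_off_fibre; [intros [Dt _]; apply (proj2 Pt Dt) | apply Rmin_pos; lra|].
  intros z Dz Hbox.
  assert (Hzt : z <> t) by (intros ->; apply (proj2 Pt Dz)).
  pose proof (Cmod_sub_gt0 _ _ Hzt); pose proof (box_Cmod _ _ _ Hbox).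
  specialize (Hbig z ltac:(lra)).
  replace (f z) with ((f z - w0) + w0)%C in Hbig by ring.
  pose proof (Cmod_triangle (f z - w0) w0); lra.
Qed.

Lemma adapted_radius_exterior (w0 t : C) : ~ closure D t -> exists r, adapted_radius w0 t r.
Proof.
  intros Ht; apply NNPP; intros Hn; apply Ht; intros eps Heps.
  apply NNPP; intros Hfar; apply Hn; exists (eps / 2).
  apply adapted_radius_off_fibre; [intros [Dt _] | lra | intros z Dz Hbox].
  - apply Hfar; exists t; rewrite Cmod_sub_diag; auto.
  - exfalso; apply Hfar; exists z; split; [exact Dz | pose proof (box_Cmod _ _ _ Hbox); lra].
Qed.

Lemma adapted_radius_exists (w0 t : C) :
  ~ image f (critical_set D f) w0 ->
  ~ image f (fun z => boundary D z /\ ~ P_set D z) w0 ->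
  exists r, adapted_radius w0 t r.
Proof.
  intros Hcrit Hbdry.
  destruct (classic (D t)) as [Dt | NDt].
  - destruct (classic (f t = w0)) as [Hft | Hft].
    + apply adapted_radius_regular; [split; auto|].
      intros HJ; apply Hcrit; exists t; repeat split; auto.
    + pose proof (Cmod_sub_gt0 _ _ Hft).
      destruct (harmonic_continuous_box D f t (Cmod (f t - w0) / 2) f_harmonic Dt ltac:(lra))
        as [rho [Hrho Hclose]].
      apply (adapted_radius_near_value w0 t rho); auto; intros [_ E]; contradiction.
  - destruct (classic (closure D t)) as [Ct | NCt]; [|apply adapted_radius_exterior, NCt].
    destruct (classic (P_set D t)) as [Pt | NPt]; [apply adapted_radius_pole, Pt|].
    assert (Bt : boundary D t)
      by (split; [exact Ct | intros [eps [Heps Hin]]; apply NDt, Hin; rewrite Cmod_sub_diag; exact Heps]).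
    assert (Hft : f t <> w0) by (intros E; apply Hbdry; exists t; auto).
    pose proof (Cmod_sub_gt0 _ _ Hft).
    destruct (f_continuous_on_boundary t Bt NPt (Cmod (f t - w0) / 2) ltac:(lra))
      as [delta [Hdelta Hclose]].
    apply (adapted_radius_near_value w0 t (delta / 2)); auto; [intros [Dt _]; contradiction | lra|].
    intros z Dz Hbox; apply Hclose.
    + intros eps Heps; exists z; rewrite Cmod_sub_diag; auto.
    + intros [_ Nz]; contradiction.
    + pose proof (box_Cmod _ _ _ Hbox); lra.
Qed.

Section FibreMatching.
Variables (w0 : C) (rad : C -> R) (d : R).
Hypotheses (rad_adapted : forall t, adapted_radius w0 t (rad t)) (d_pos : 0 < d)
  (rad_cover : forall z, D z -> exists t, box t (rad t / 2) z /\ d <= rad t / 2).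

Lemma fibre_rad_ge (z : C) : fibre D f w0 z -> 2 * d <= rad z.
Proof.
  intros [Dz Hz]; destruct (rad_cover z Dz) as [t [Hbox Hd]].
  destruct (rad_adapted t) as [Hrad [Hoff Hon]].
  assert (Hbox' : box t (rad t) z) by (eapply box_le; [|exact Hbox]; lra).
  destruct (classic (fibre D f w0 t)) as [Ht | Ht].
  - destruct (Hon Ht) as [_ [Hinj _]].
    assert (t = z) as <-.
    { apply Hinj; [apply box_center, Hrad | exact Hbox' | destruct Ht as [_ ->]; symmetry; exact Hz]. }
    lra.
  - specialize (Hoff Ht z Dz Hbox'); rewrite Hz, Cmod_sub_diag in Hoff; lra.
Qed.

Lemma fibre_separated (zi zj : C) :
  fibre D f w0 zi -> fibre D f w0 zj -> box zi (2 * d) zj -> zi = zj.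
Proof.
  intros Hi Hj Hbox; destruct (proj2 (proj2 (rad_adapted zi)) Hi) as [_ [Hinj _]].
  pose proof (fibre_rad_ge zi Hi); pose proof (proj1 (rad_adapted zi)).
  apply Hinj; [apply box_center; lra | eapply box_le; eauto |].
  destruct Hi as [_ ->]; destruct Hj as [_ ->]; reflexivity.
Qed.

Lemma near_fibre (z : C) : D z -> Cmod (f z - w0) < d ->
  exists t, fibre D f w0 t /\ box t (rad t / 2) z.
Proof.
  intros Dz Hz; destruct (rad_cover z Dz) as [t [Hbox Hd]].
  exists t; split; [|exact Hbox].
  apply NNPP; intros Ht; destruct (rad_adapted t) as [Hrad [Hoff _]].
  specialize (Hoff Ht z Dz (box_le _ (rad t / 2) (rad t) _ ltac:(lra) Hbox)); lra.
Qed.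

Lemma fibre_lift (w : C) : Cmod (w - w0) < d * d ->
  exists g : C -> C, forall z, fibre D f w0 z -> box z (d / 2) (g z) /\ f (g z) = w.
Proof.
  intros Hw.
  assert (Hlift : forall z, fibre D f w0 z -> exists y, box z (d / 2) y /\ f y = w).
  { intros z Hz; destruct (proj2 (proj2 (rad_adapted z)) Hz) as [_ [_ Hsurj]].
    pose proof (fibre_rad_ge z Hz); apply Hsurj; [lra|].
    assert (d * d <= rad z * (d / 2)) by nra; lra. }
  exists (fun z => epsilon (inhabits (0 : C)) (fun y => box z (d / 2) y /\ f y = w)).
  intros z Hz; exact (epsilon_spec _ _ (Hlift z Hz)).
Qed.

Lemma fibres_same_card_near (w : C) : Cmod (w - w0) < Rmin d (d * d) ->
  same_card (fibre D f w0) (fibre D f w).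
Proof.
  intros Hw; pose proof (Rmin_l d (d * d)); pose proof (Rmin_r d (d * d)).
  destruct (fibre_lift w ltac:(lra)) as [g Hg].
  exists g; split; [|split].
  - intros z Hz; destruct (Hg z Hz) as [Hbox Hgz]; split; [|exact Hgz].
    destruct (proj2 (proj2 (rad_adapted z)) Hz) as [Hsub _]; apply Hsub.
    pose proof (fibre_rad_ge z Hz); eapply box_le; [|exact Hbox]; lra.
  - intros zi zj Hi Hj E; apply fibre_separated; auto.
    destruct (Hg zi Hi) as [Bi _]; destruct (Hg zj Hj) as [Bj _]; rewrite E in Bi.
    apply (box_le _ (d / 2 + d / 2)); [lra | eapply box_triangle; [exact Bi | apply box_sym, Bj]].
  - intros z [Dz Hz].
    destruct (near_fibre z Dz ltac:(rewrite Hz; lra)) as [t [Ht Hbox]].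
    exists t; split; [exact Ht|].
    destruct (proj2 (proj2 (rad_adapted t)) Ht) as [_ [Hinj _]].
    destruct (Hg t Ht) as [Bt Hgt]; pose proof (fibre_rad_ge t Ht).
    apply Hinj; [eapply box_le; [|exact Bt] | eapply box_le; [|exact Hbox] |]; [lra | lra | congruence].
Qed.

End FibreMatching.

Lemma fibre_card_locally_constant (w0 : C) :
  ~ image f (critical_set D f) w0 ->
  ~ image f (fun z => boundary D z /\ ~ P_set D z) w0 ->
  exists r, 0 < r /\ forall w, Cmod (w - w0) < r -> same_card (fibre D f w0) (fibre D f w).
Proof.
  intros Hcrit Hbdry.
  set (rad := fun t => proj1_sig (constructive_indefinite_description _
                                    (adapted_radius_exists w0 t Hcrit Hbdry))).
  assert (rad_adapted : forall t, adapted_radius w0 t (rad t))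
    by (intros t; exact (proj2_sig (constructive_indefinite_description _ _))).
  destruct (bounded_box_cover D (fun t => rad t / 2) D_bounded) as [d [Hd Hcover]].
  { intros t; pose proof (proj1 (rad_adapted t)); lra. }
  exists (Rmin d (d * d)); split; [apply Rmin_pos; nra|].
  exact (fibres_same_card_near w0 rad d rad_adapted Hd Hcover).
Qed.

End LocalValence.

Theorem corollary4p13 (D : C -> Prop) (f : C -> C) :
  open D ->
  bounded_set D ->
  harmonic_on D f ->
  finite_set (P_set D) ->
  (forall alpha, P_set D alpha -> is_pole f alpha) ->
  (* f extends continuously to (boundary D) \ P; the extension is f itself,
     continuous on closure(D) \ P = D ∪ (boundary D \ P) at those points *)
  (forall z, boundary D z -> ~ P_set D z ->
     forall eps : R, 0 < eps -> exists delta : R, 0 < delta /\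
       forall w, closure D w -> ~ P_set D w -> Cmod (w - z) < delta ->
         Cmod (f w - f z) < eps) ->
  forall w1 w2 : C,
    (exists K : C -> Prop, connected_set K /\ K w1 /\ K w2 /\
       forall w, K w ->
         ~ image f (critical_set D f) w /\
         ~ image f (fun z => boundary D z /\ ~ P_set D z) w) ->
    same_card (fun z => D z /\ f z = w1) (fun z => D z /\ f z = w2).
Proof.
  intros HD Hbounded Hharm _ Hpoles Hcont w1 w2 [K [HK [K1 [K2 HKw]]]].
  apply (same_card_constant_on_connected (fibre D f) K HK); [|exact K1 | exact K2].
  intros w0 Kw0; destruct (HKw w0 Kw0) as [Hcrit Hbdry].
  exact (fibre_card_locally_constant D f HD Hbounded Hharm Hpoles Hcont w0 Hcrit Hbdry).
Qed.
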